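(* Let $z\in\mathcal T_\rightarrow$ and let $z'$ belong to the closure of $\mathcal T_\leftarrow$ in $X^{(c)}$. Then $[z'\cdot\xi]\ne0$ for all $\xi$ in the support of $\gamma(z)$.
   Context: $[z\cdot z']=z_0z'_0-z_1z'_1-z_2z'_2$ on $\mathbb C^3$, $z^2=[z\cdot z]$; $X^{(c)}=\{z\in\mathbb C^3:z^2=-1\}$, $z=x+iy$; $G=SO_0(1,2)$; $V^+=\{y:y^2>0,y_0>0\}$; fix $e\in V^+$; $\mathcal T_\rightarrow=\{z\in X^{(c)}:y^2<0,{\rm sgn}\det(e,x,y)=-1\}$, $\mathcal T_\leftarrow$ the same with $+1$. Cycles: for $v>0$ let $z_v=(0,i\sinh v,\cosh v)\in\mathcal T_\rightarrow$; every $z\in\mathcal T_\rightarrow$ can be written $z=gz_v$ with $g\in G$, $v>0$. With $\xi(\Phi)=(1,\sin\Phi,\cos\Phi)$, $\gamma(z_v)$ is the path $\phi\mapsto\xi(\phi+iv)$, $\phi$ from $-\pi/2$ to $\pi/2$, and $\gamma(z)=g\gamma(z_v)$ (for any such representation $z=gz_v$). *)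

From Stdlib Require Import Reals.
From Coquelicot Require Import Coquelicot.
Open Scope R_scope.

Definition rv := (R * R * R)%type.
Definition cv := (C * C * C)%type.
Definition r0 (u : rv) : R := fst (fst u).
Definition r1 (u : rv) : R := snd (fst u).
Definition r2 (u : rv) : R := snd u.
Definition c0 (z : cv) : C := fst (fst z).
Definition c1 (z : cv) : C := snd (fst z).
Definition c2 (z : cv) : C := snd z.

Definition mdot (z w : cv) : C :=
  (c0 z * c0 w - c1 z * c1 w - c2 z * c2 w)%C.
Definition rdot (u w : rv) : R := r0 u * r0 w - r1 u * r1 w - r2 u * r2 w.

Definition Xc (z : cv) : Prop := mdot z z = RtoC (-1).

Definition re_part (z : cv) : rv := (Re (c0 z), Re (c1 z), Re (c2 z)).
Definition im_part (z : cv) : rv := (Im (c0 z), Im (c1 z), Im (c2 z)).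

Definition det3 (a b c : rv) : R :=
    r0 a * (r1 b * r2 c - r2 b * r1 c)
  - r0 b * (r1 a * r2 c - r2 a * r1 c)
  + r0 c * (r1 a * r2 b - r2 a * r1 b).

Definition Vplus (y : rv) : Prop := rdot y y > 0 /\ r0 y > 0.

Definition Tright (e : rv) (z : cv) : Prop :=
  Xc z /\ rdot (im_part z) (im_part z) < 0 /\ det3 e (re_part z) (im_part z) < 0.
Definition Tleft (e : rv) (z : cv) : Prop :=
  Xc z /\ rdot (im_part z) (im_part z) < 0 /\ det3 e (re_part z) (im_part z) > 0.

(* closure in X^(c) (topology induced from C^3) of a set S of X^(c) *)
Definition cdist (z w : cv) : R :=
  Cmod (c0 z - c0 w)%C + Cmod (c1 z - c1 w)%C + Cmod (c2 z - c2 w)%C.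
Definition closureX (S : cv -> Prop) (z : cv) : Prop :=
  Xc z /\ forall eps : R, eps > 0 -> exists w, S w /\ cdist w z < eps.

Definition mat := nat -> nat -> R.
Definition rapply (g : mat) (u : rv) : rv :=
  (g 0%nat 0%nat * r0 u + g 0%nat 1%nat * r1 u + g 0%nat 2%nat * r2 u,
   g 1%nat 0%nat * r0 u + g 1%nat 1%nat * r1 u + g 1%nat 2%nat * r2 u,
   g 2%nat 0%nat * r0 u + g 2%nat 1%nat * r1 u + g 2%nat 2%nat * r2 u).
Definition capply (g : mat) (z : cv) : cv :=
  ((RtoC (g 0%nat 0%nat) * c0 z + RtoC (g 0%nat 1%nat) * c1 z + RtoC (g 0%nat 2%nat) * c2 z)%C,
   (RtoC (g 1%nat 0%nat) * c0 z + RtoC (g 1%nat 1%nat) * c1 z + RtoC (g 1%nat 2%nat) * c2 z)%C,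
   (RtoC (g 2%nat 0%nat) * c0 z + RtoC (g 2%nat 1%nat) * c1 z + RtoC (g 2%nat 2%nat) * c2 z)%C).
Definition col (g : mat) (j : nat) : rv := (g 0%nat j, g 1%nat j, g 2%nat j).
Definition detm (g : mat) : R := det3 (col g 0) (col g 1) (col g 2).

(* G = SO_0(1,2): linear maps of R^3 preserving the form, of determinant 1,
   preserving the forward cone V^+ (orthochronous). *)
Definition inG (g : mat) : Prop :=
  (forall u w : rv, rdot (rapply g u) (rapply g w) = rdot u w) /\
  detm g = 1 /\
  (forall y : rv, Vplus y -> Vplus (rapply g y)).

Definition csin (Phi : C) : C := (sin (fst Phi) * cosh (snd Phi), cos (fst Phi) * sinh (snd Phi)).
Definition ccos (Phi : C) : C := (cos (fst Phi) * cosh (snd Phi), - (sin (fst Phi) * sinh (snd Phi))).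

Definition xi (Phi : C) : cv := (RtoC 1, csin Phi, ccos Phi).

Definition zv (v : R) : cv := (RtoC 0, (0, sinh v), RtoC (cosh v)).

(* support of the cycle gamma(z): the points g xi(phi + i v), phi in [-pi/2, pi/2],
   for a representation z = g z_v, g in G, v > 0 *)
Definition gamma_support (z : cv) (p : cv) : Prop :=
  exists (g : mat) (v phi : R),
    inG g /\ v > 0 /\ z = capply g (zv v) /\
    - (PI / 2) <= phi <= PI / 2 /\ p = capply g (xi (phi, v)).

From Stdlib Require Import Reals Lra IndefiniteDescription.
From Coquelicot Require Import Coquelicot.
Open Scope R_scope.

(* Write z' = a + i b and p = g xi(phi + i v) = P + i Q.  The vectors P, Q and
   n = g (cosh v, sin phi, cos phi) form an orthogonal frame with
   <n,n> = -<P,P> = -<Q,Q> = sinh^2 v, n in V^+ and det(n,P,Q) < 0.  If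
   [z'.p] = 0, i.e. <a,P> = <b,Q> and <a,Q> = -<b,P>, then expanding a and b in
   this frame, together with a^2 - b^2 = -1 and <a,b> = 0, gives <a,n> = 0 and
   <b,n> <> 0.  The Gram identity then reads
     det(n,P,Q) det(e,a,b) = <e,n>(<b,P>^2 + <b,Q>^2) - <b,n>(<e,P><b,P> + <e,Q><b,Q>),
   which is positive by a reverse Cauchy-Schwarz inequality, because e is
   timelike and b^2 <= 0.  But on the closure of T_<- we have b^2 <= 0 and
   det(e,a,b) >= 0, while det(n,P,Q) < 0. *)

Lemma rdot_sym u w : rdot u w = rdot w u.
Proof. unfold rdot; ring. Qed.

Lemma det3_rapply g a b c :
  det3 (rapply g a) (rapply g b) (rapply g c) = detm g * det3 a b c.
Proof.
  destruct a as [[a0 a1] a2], b as [[b0 b1] b2], c as [[c0 c1] c2].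
  unfold detm, col, det3, rapply, r0, r1, r2; simpl; ring.
Qed.

(* No sign appears because the Gram matrix of the form, diag(1,-1,-1), has determinant 1. *)
Lemma det3_gram f1 f2 f3 u1 u2 u3 :
  det3 f1 f2 f3 * det3 u1 u2 u3 =
  det3 (rdot f1 u1, rdot f2 u1, rdot f3 u1) (rdot f1 u2, rdot f2 u2, rdot f3 u2)
       (rdot f1 u3, rdot f2 u3, rdot f3 u3).
Proof.
  destruct f1 as [[a0 a1] a2], f2 as [[b0 b1] b2], f3 as [[c0 c1] c2].
  destruct u1 as [[d0 d1] d2], u2 as [[e0 e1] e2], u3 as [[h0 h1] h2].
  unfold det3, rdot, r0, r1, r2; simpl; ring.
Qed.

Lemma rdot_eq0_of_basis f1 f2 f3 x w : det3 f1 f2 f3 <> 0 ->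
  rdot x f1 = 0 -> rdot x f2 = 0 -> rdot x f3 = 0 -> rdot x w = 0.
Proof.
  intros Hdet H1 H2 H3.
  assert (Hx : forall u v, det3 x u v = 0).
  { intros u v. apply (Rmult_eq_reg_l (det3 f1 f2 f3)); [|exact Hdet].
    rewrite det3_gram, !(rdot_sym _ x), H1, H2, H3, Rmult_0_r.
    unfold det3, r0, r1, r2; simpl; ring. }
  pose proof (Hx (0, 1, 0) (0, 0, 1)) as E0.
  pose proof (Hx (1, 0, 0) (0, 0, 1)) as E1.
  pose proof (Hx (1, 0, 0) (0, 1, 0)) as E2.
  destruct x as [[x0 x1] x2].
  unfold det3, rdot, r0, r1, r2 in *; simpl in *.
  ring_simplify in E0; ring_simplify in E1; ring_simplify in E2.
  nra.
Qed.

Definition lorentz_frame (s : R) (n P Q : rv) : Prop :=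
  rdot n n = s /\ rdot P P = - s /\ rdot Q Q = - s /\
  rdot n P = 0 /\ rdot n Q = 0 /\ rdot P Q = 0.

Lemma lorentz_frame_det_sqr s n P Q : lorentz_frame s n P Q ->
  det3 n P Q * det3 n P Q = s * s * s.
Proof.
  intros (Hn & HP & HQ & HnP & HnQ & HPQ).
  rewrite det3_gram, (rdot_sym P n), (rdot_sym Q n), (rdot_sym Q P), Hn, HP, HQ, HnP, HnQ, HPQ.
  unfold det3, r0, r1, r2; simpl; ring.
Qed.

Lemma lorentz_frame_expansion s n P Q u w : lorentz_frame s n P Q -> s <> 0 ->
  s * rdot u w = rdot u n * rdot w n - rdot u P * rdot w P - rdot u Q * rdot w Q.
Proof.
  intros Hf Hs. pose proof Hf as (Hn & HP & HQ & HnP & HnQ & HPQ).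
  set (a := rdot u n); set (b := rdot u P); set (c := rdot u Q).
  (* r = s u - a n + b P + c Q is orthogonal to the basis n, P, Q, hence to w. *)
  set (r := (s * r0 u - a * r0 n + b * r0 P + c * r0 Q,
             s * r1 u - a * r1 n + b * r1 P + c * r1 Q,
             s * r2 u - a * r2 n + b * r2 P + c * r2 Q) : rv).
  assert (Hr : forall f, rdot r f = s * rdot u f - a * rdot n f + b * rdot P f + c * rdot Q f)
    by (intros f; unfold rdot, r, r0, r1, r2; simpl; ring).
  assert (Hdet : det3 n P Q <> 0).
  { intros H0. pose proof (lorentz_frame_det_sqr _ _ _ _ Hf) as Hsq.
    rewrite H0, Rmult_0_l in Hsq.
    apply (Rmult_integral_contrapositive_currified (s * s) s);
      [apply Rmult_integral_contrapositive_currified | |]; auto. }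
  assert (Hrw : rdot r w = 0).
  { apply (rdot_eq0_of_basis n P Q); trivial; rewrite Hr.
    - rewrite Hn, (rdot_sym P n), (rdot_sym Q n), HnP, HnQ; unfold a; ring.
    - rewrite HnP, HP, (rdot_sym Q P), HPQ; unfold b; ring.
    - rewrite HnQ, HPQ, HQ; unfold c; ring. }
  rewrite Hr, (rdot_sym n w), (rdot_sym P w), (rdot_sym Q w) in Hrw. lra.
Qed.

Lemma lorentz_frame_rapply g s n P Q :
  (forall u w, rdot (rapply g u) (rapply g w) = rdot u w) ->
  lorentz_frame s n P Q -> lorentz_frame s (rapply g n) (rapply g P) (rapply g Q).
Proof. intros Hg; unfold lorentz_frame; rewrite !Hg; trivial. Qed.

Lemma timelike_dot_lt x0 x1 x2 y0 y1 y2 : 0 < x0 -> 0 < y0 ->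
  x1 * x1 + x2 * x2 < x0 * x0 -> y1 * y1 + y2 * y2 <= y0 * y0 ->
  x1 * y1 + x2 * y2 < x0 * y0.
Proof.
  intros Hx0 Hy0 Hx Hy.
  pose proof (Rplus_le_le_0_compat _ _ (Rle_0_sqr (y0 * x1 - x0 * y1))
                (Rle_0_sqr (y0 * x2 - x0 * y2))) as H; unfold Rsqr in H.
  assert (Hx' : y0 * y0 * (x1 * x1 + x2 * x2) < y0 * y0 * (x0 * x0))
    by (apply Rmult_lt_compat_l; nra).
  assert (Hy' : x0 * x0 * (y1 * y1 + y2 * y2) <= x0 * x0 * (y0 * y0))
    by (apply Rmult_le_compat_l; nra).
  apply (Rmult_lt_reg_l (x0 * y0)); nra.
Qed.

Lemma Vplus_rdot_pos u w : Vplus u -> Vplus w -> 0 < rdot u w.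
Proof.
  destruct u as [[u0 u1] u2], w as [[w0 w1] w2].
  unfold Vplus, rdot, r0, r1, r2; simpl. intros [Hu Hu0] [Hw Hw0].
  enough (u1 * w1 + u2 * w2 < u0 * w0) by lra.
  apply timelike_dot_lt; lra.
Qed.

Section NullPairInFrame.
Variables (s : R) (n P Q a b : rv).
Hypotheses (Hf : lorentz_frame s n P Q) (Hs : 0 < s).
Hypotheses (Hab : rdot a a - rdot b b = -1) (Hab0 : rdot a b = 0).
Hypotheses (HaP : rdot a P = rdot b Q) (HaQ : rdot a Q = - rdot b P).

Lemma null_pair_frame_coords : rdot a n = 0 /\ 0 < rdot b n * rdot b n.
Proof.
  pose proof (lorentz_frame_expansion s n P Q a b Hf ltac:(lra)) as Eab.
  pose proof (lorentz_frame_expansion s n P Q a a Hf ltac:(lra)) as Eaa.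
  pose proof (lorentz_frame_expansion s n P Q b b Hf ltac:(lra)) as Ebb.
  rewrite Hab0, HaP, HaQ in Eab; rewrite HaP, HaQ in Eaa.
  assert (Hbn : rdot b n * rdot b n = rdot a n * rdot a n + s) by nra.
  assert (Han : rdot a n * rdot b n = 0) by lra.
  destruct (Rmult_integral _ _ Han) as [H | H]; rewrite H in *; nra.
Qed.

Lemma frame_det_mul_pos e : 0 < rdot e e -> 0 < rdot e n -> rdot b b <= 0 ->
  0 < det3 n P Q * det3 e a b.
Proof.
  intros Hee Hen Hbb.
  destruct null_pair_frame_coords as [Han Hbn].
  pose proof (lorentz_frame_expansion s n P Q e e Hf ltac:(lra)) as Eee.
  pose proof (lorentz_frame_expansion s n P Q b b Hf ltac:(lra)) as Ebb.
  set (r := rdot b P * rdot b P + rdot b Q * rdot b Q).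
  assert (Hr : rdot b n * rdot b n <= r) by (unfold r; nra).
  assert (Hgram : det3 n P Q * det3 e a b =
    rdot e n * r - (rdot e P * (rdot b n * rdot b P) + rdot e Q * (rdot b n * rdot b Q))).
  { rewrite det3_gram, !(rdot_sym n), !(rdot_sym P), !(rdot_sym Q), Han, HaP, HaQ.
    unfold r, det3, r0, r1, r2; simpl; ring. }
  rewrite Hgram.
  enough (rdot e P * (rdot b n * rdot b P) + rdot e Q * (rdot b n * rdot b Q) < rdot e n * r)
    by lra.
  assert (Hse : 0 < s * rdot e e) by (apply Rmult_lt_0_compat; lra).
  apply timelike_dot_lt; [lra | lra | lra |].
  replace (_ + _) with (r * (rdot b n * rdot b n)) by (unfold r; ring).
  apply Rmult_le_compat_l; lra.
Qed.

End NullPairInFrame.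

Definition cv_of_parts (x y : rv) : cv :=
  ((r0 x, r0 y), (r1 x, r1 y), (r2 x, r2 y)).

Lemma capply_cv_of_parts g x y :
  capply g (cv_of_parts x y) = cv_of_parts (rapply g x) (rapply g y).
Proof.
  destruct x as [[x0 x1] x2], y as [[y0 y1] y2].
  unfold capply, cv_of_parts, rapply, c0, c1, c2, r0, r1, r2; simpl.
  unfold Cplus, Cmult, RtoC; simpl. f_equal; [f_equal |]; f_equal; ring.
Qed.

Lemma mdot_cv_of_parts w x y : mdot w (cv_of_parts x y) =
  (rdot (re_part w) x - rdot (im_part w) y, rdot (re_part w) y + rdot (im_part w) x).
Proof.
  destruct x as [[x0 x1] x2], y as [[y0 y1] y2], w as [[[a0 b0] [a1 b1]] [a2 b2]].
  unfold mdot, cv_of_parts, rdot, re_part, im_part, c0, c1, c2, r0, r1, r2; simpl.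
  unfold Cminus, Cplus, Copp, Cmult; simpl. f_equal; ring.
Qed.

Lemma Xc_re_im w : Xc w ->
  rdot (re_part w) (re_part w) - rdot (im_part w) (im_part w) = -1 /\
  rdot (re_part w) (im_part w) = 0.
Proof.
  destruct w as [[[a0 b0] [a1 b1]] [a2 b2]].
  unfold Xc, mdot, rdot, re_part, im_part, c0, c1, c2, r0, r1, r2, RtoC; simpl.
  unfold Cminus, Cplus, Copp, Cmult; simpl. intros H; injection H; lra.
Qed.

Definition xi_re (v phi : R) : rv := (1, sin phi * cosh v, cos phi * cosh v).
Definition xi_im (v phi : R) : rv := (0, cos phi * sinh v, - (sin phi * sinh v)).
Definition xi_normal (v phi : R) : rv := (cosh v, sin phi, cos phi).

Lemma xi_parts v phi : xi (phi, v) = cv_of_parts (xi_re v phi) (xi_im v phi).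
Proof. reflexivity. Qed.

Lemma cosh_sqr_sub_sinh_sqr v : cosh v * cosh v - sinh v * sinh v = 1.
Proof.
  unfold cosh, sinh. rewrite exp_Ropp.
  pose proof (exp_pos v). field. lra.
Qed.

Lemma xi_frame v phi :
  lorentz_frame (sinh v * sinh v) (xi_normal v phi) (xi_re v phi) (xi_im v phi).
Proof.
  pose proof (cosh_sqr_sub_sinh_sqr v) as Hv. pose proof (sin2_cos2 phi) as Hphi.
  unfold Rsqr in Hphi.
  assert (Hphi_c : forall t, (sin phi * sin phi + cos phi * cos phi) * t = t)
    by (intros t; rewrite Hphi; ring).
  pose proof (Hphi_c (cosh v * cosh v)). pose proof (Hphi_c (sinh v * sinh v)).
  pose proof (Hphi_c (cosh v)).
  unfold lorentz_frame, xi_normal, xi_re, xi_im, rdot, r0, r1, r2; simpl.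
  repeat split; lra.
Qed.

Lemma det3_xi_frame v phi :
  det3 (xi_normal v phi) (xi_re v phi) (xi_im v phi) = - (sinh v * sinh v * sinh v).
Proof.
  pose proof (cosh_sqr_sub_sinh_sqr v) as Hv. pose proof (sin2_cos2 phi) as Hphi.
  unfold Rsqr in Hphi.
  unfold det3, xi_normal, xi_re, xi_im, r0, r1, r2; simpl.
  transitivity (- sinh v * (sin phi * sin phi + cos phi * cos phi) * (cosh v * cosh v - 1));
    [ring | rewrite Hphi; replace (cosh v * cosh v - 1) with (sinh v * sinh v) by lra; ring].
Qed.

Lemma sinh_pos v : 0 < v -> 0 < sinh v.
Proof. intros Hv. rewrite <- sinh_0. apply sinh_lt, Hv. Qed.

Lemma Vplus_xi_normal v phi : 0 < v -> Vplus (xi_normal v phi).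
Proof.
  intros Hv. destruct (xi_frame v phi) as [Hn _]. pose proof (sinh_pos v Hv).
  split.
  - rewrite Hn. nra.
  - unfold xi_normal, r0, cosh; simpl. pose proof (exp_pos v); pose proof (exp_pos (- v)); lra.
Qed.

Lemma inv_succ_pos k : 0 < / (INR k + 1).
Proof. apply Rinv_0_lt_compat. pose proof (pos_INR k). lra. Qed.

Lemma is_lim_seq_inv_succ : is_lim_seq (fun k => / (INR k + 1)) 0.
Proof.
  assert (H : is_lim_seq (fun k => / INR k) (Rbar_inv p_infty))
    by (apply is_lim_seq_inv; [apply is_lim_seq_INR | discriminate]).
  apply is_lim_seq_incr_1 in H.
  eapply is_lim_seq_ext; [|exact H]. intros k; cbv beta. rewrite S_INR. reflexivity.
Qed.

Lemma closureX_seq S z : closureX S z ->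
  exists u : nat -> cv, (forall k, S (u k)) /\
    forall f : cv -> R, (forall w, Rabs (f w - f z) <= cdist w z) ->
      is_lim_seq (fun k => f (u k)) (f z).
Proof.
  intros [_ Hz].
  assert (Hu : forall k, {w | S w /\ cdist w z < / (INR k + 1)})
    by (intros k; apply constructive_indefinite_description, Hz, inv_succ_pos).
  exists (fun k => proj1_sig (Hu k)). split; [intros k; apply (proj2_sig (Hu k)) |].
  intros f Hf.
  apply is_lim_seq_le_le with (u := fun k => f z - / (INR k + 1))
                              (w := fun k => f z + / (INR k + 1)).
  - intros k. destruct (proj2_sig (Hu k)) as [_ Hk].
    pose proof (Hf (proj1_sig (Hu k))) as Hfk. apply Rabs_le_between' in Hfk. lra.
  - replace (Finite (f z)) with (Finite (f z - 0)) by (f_equal; ring).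
    apply is_lim_seq_minus'; [apply is_lim_seq_const | apply is_lim_seq_inv_succ].
  - replace (Finite (f z)) with (Finite (f z + 0)) by (f_equal; ring).
    apply is_lim_seq_plus'; [apply is_lim_seq_const | apply is_lim_seq_inv_succ].
Qed.

Lemma Rabs_coord_sub_le_cdist w z :
  Rabs (r0 (re_part w) - r0 (re_part z)) <= cdist w z /\
  Rabs (r1 (re_part w) - r1 (re_part z)) <= cdist w z /\
  Rabs (r2 (re_part w) - r2 (re_part z)) <= cdist w z /\
  Rabs (r0 (im_part w) - r0 (im_part z)) <= cdist w z /\
  Rabs (r1 (im_part w) - r1 (im_part z)) <= cdist w z /\
  Rabs (r2 (im_part w) - r2 (im_part z)) <= cdist w z.
Proof.
  assert (Hc : forall c d : C, Rabs (Re c - Re d) <= Cmod (c - d) /\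
                               Rabs (Im c - Im d) <= Cmod (c - d)).
  { intros c d.
    change (Re c - Re d) with (Re (c - d)); change (Im c - Im d) with (Im (c - d)).
    pose proof (Rmax_Cmod (c - d)%C) as H.
    split; eapply Rle_trans; [apply Rmax_l | exact H | apply Rmax_r | exact H]. }
  destruct w as [[w0 w1] w2], z as [[z0 z1] z2].
  destruct (Hc w0 z0), (Hc w1 z1), (Hc w2 z2).
  pose proof (Cmod_ge_0 (w0 - z0)%C); pose proof (Cmod_ge_0 (w1 - z1)%C);
    pose proof (Cmod_ge_0 (w2 - z2)%C).
  unfold cdist; cbn -[Cmod Cminus Re Im].
  repeat split; lra.
Qed.

(* Proves [is_lim_seq (fun k => F (u k)) (F z)] for F polynomial in the real
   coordinates, given [Hlim] as produced by [closureX_seq]. *)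
Ltac lim_poly Hlim :=
  repeat first
    [ apply is_lim_seq_const | apply is_lim_seq_minus' | apply is_lim_seq_plus'
    | apply is_lim_seq_mult'
    | match goal with
      | |- is_lim_seq _ (Finite (?r (?part ?z))) =>
          apply (Hlim (fun w => r (part w))); intros w; cbv beta;
          pose proof (Rabs_coord_sub_le_cdist w z); tauto
      end ].

Lemma closure_Tleft e z : closureX (Tleft e) z ->
  rdot (im_part z) (im_part z) <= 0 /\ 0 <= det3 e (re_part z) (im_part z).
Proof.
  intros Hz. destruct (closureX_seq _ _ Hz) as [u [HS Hlim]].
  assert (Hb : is_lim_seq (fun k => rdot (im_part (u k)) (im_part (u k)))
                          (rdot (im_part z) (im_part z)))
    by (unfold rdot; lim_poly Hlim).
  assert (Hdet : is_lim_seq (fun k => det3 e (re_part (u k)) (im_part (u k)))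
                            (det3 e (re_part z) (im_part z)))
    by (unfold det3; lim_poly Hlim).
  split.
  - exact (is_lim_seq_le _ (fun _ => 0) _ 0 (fun k => Rlt_le _ _ (proj1 (proj2 (HS k))))
             Hb (is_lim_seq_const 0)).
  - exact (is_lim_seq_le (fun _ => 0) _ 0 _ (fun k => Rlt_le _ _ (proj2 (proj2 (HS k))))
             (is_lim_seq_const 0) Hdet).
Qed.

Theorem proposition18 (e : rv) (he : Vplus e) (z z' : cv)
  (hz : Tright e z) (hz' : closureX (Tleft e) z') :
  forall p : cv, gamma_support z p -> mdot z' p <> RtoC 0.
Proof.
  intros p (g & v & phi & (Hform & Hdetg & Hcone) & Hv & _ & _ & ->) Hzero.
  rewrite xi_parts, capply_cv_of_parts, mdot_cv_of_parts in Hzero.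
  unfold RtoC in Hzero; injection Hzero as HaP HaQ.
  destruct (Xc_re_im z' (proj1 hz')) as [Hab Hab0].
  destruct (closure_Tleft e z' hz') as [Hbb Hdet].
  pose proof (lorentz_frame_rapply g _ _ _ _ Hform (xi_frame v phi)) as Hframe.
  assert (Hs : 0 < sinh v * sinh v) by (pose proof (sinh_pos v Hv); nra).
  pose proof (Vplus_rdot_pos e _ he (Hcone _ (Vplus_xi_normal v phi Hv))) as Hen.
  pose proof (frame_det_mul_pos _ _ _ _ _ _ Hframe Hs Hab Hab0 ltac:(lra) ltac:(lra)
                e (proj1 he) Hen Hbb) as Hpos.
  rewrite det3_rapply, Hdetg, det3_xi_frame in Hpos.
  assert (0 < sinh v * sinh v * sinh v) by (pose proof (sinh_pos v Hv); nra).
  nra.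
Qed.
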